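(* Let $\Gamma\in(1,2]$ and consider the two-dimensional special relativistic hydrodynamics (RHD) system with ideal-gas equation of state, as described in the context. Let $\bm{U}_{LD},\bm{U}_{RD},\bm{U}_{LU},\bm{U}_{RU}\in\mathcal{G}$ be four admissible states, and let $\bm{F}_{\ast}=\bm{F}(\bm{U}_{\ast})$, $\bm{G}_{\ast}=\bm{G}(\bm{U}_{\ast})$ for $\ast\in\{LD,RD,LU,RU\}$. Define the wave speeds $$S_L=2\min_{\ast}\lambda_A^{(1)}(\bm{U}_{\ast}),\quad S_R=2\max_{\ast}\lambda_A^{(4)}(\bm{U}_{\ast}),\quad S_D=2\min_{\ast}\lambda_B^{(1)}(\bm{U}_{\ast}),\quad S_U=2\max_{\ast}\lambda_B^{(4)}(\bm{U}_{\ast}),$$ the min/max being over $\ast\in\{LD,RD,LU,RU\}$, and assume $S_L<0<S_R$ and $S_D<0<S_U$. Then the intermediate state of the two-dimensional HLL Riemann solver $$\bm{U}^{\ast}=\frac{S_RS_U\bm{U}_{RU}+S_LS_D\bm{U}_{LD}-S_RS_D\bm{U}_{RD}-S_LS_U\bm{U}_{LU}}{(S_R-S_L)(S_U-S_D)}-\frac{S_U(\bm{F}_{RU}-\bm{F}_{LU})-S_D(\bm{F}_{RD}-\bm{F}_{LD})}{(S_R-S_L)(S_U-S_D)}-\frac{S_R(\bm{G}_{RU}-\bm{G}_{RD})-S_L(\bm{G}_{LU}-\bm{G}_{LD})}{(S_R-S_L)(S_U-S_D)}$$ is admissible, i.e. writing $\bm{U}^\ast=(D^\ast,\bm{m}^\ast,E^\ast)^T$,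 one has $D^{\ast}>0$, $E^{\ast}>0$ and $(E^{\ast})^2-(D^{\ast})^2-|\bm{m}^{\ast}|^2>0$.
   Context: Units with speed of light $c=1$. Primitive variables: rest-mass density $\rho$, velocity $\bm{u}=(u,v)$ with $|\bm{u}|<1$, pressure $p$. Lorentz factor $\gamma=1/\sqrt{1-|\bm{u}|^2}$, specific internal energy $e$ with $p=(\Gamma-1)\rho e$, specific enthalpy $h=1+e+p/\rho$, sound speed $c_s=\sqrt{\Gamma p/(\rho h)}$. Conservative variables $\bm{U}=(D,\bm{m},E)^T$ with $D=\rho\gamma$, $\bm{m}=Dh\gamma\bm{u}$, $E=Dh\gamma-p$; fluxes $\bm{F}(\bm{U})=(Du,\ \bm{m}u+p(1,0),\ (E+p)u)^T$ and $\bm{G}(\bm{U})=(Dv,\ \bm{m}v+p(0,1),\ (E+p)v)^T$, the system being $\partial_t\bm{U}+\partial_x\bm{F}+\partial_y\bm{G}=0$. The admissible set is $\mathcal{G}=\{\bm{U}=(D,\bm{m},E)^T: \rho>0,\ p>0,\ |\bm{u}|<1\}$, equivalently $\{D>0,\ E>\sqrt{D^2+|\bm{m}|^2}\}$ (primitive variables are recovered from $\bm{U}\in\mathcal{G}$). For $i=1,2$ (with $u_1=u$, $u_2=v$) the extreme eigenvalues of $\partial\bm{F}_i/\partial\bm{U}$ are $$\lambda_{i}^{(1),(4)}(\bm{U})=\frac{u_i(1-c_s^2)\mp c_s\gamma^{-1}\sqrt{1-u_i^2-c_s^2(|\bm{u}|^2-u_i^2)}}{1-c_s^2|\bm{u}|^2};$$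 $\lambda_A^{(k)}:=\lambda_1^{(k)}$ (the $x$-direction, flux $\bm{F}$) and $\lambda_B^{(k)}:=\lambda_2^{(k)}$ (the $y$-direction, flux $\bm{G}$), $k=1,4$. *)

From Stdlib Require Import Reals Lra.
Open Scope R_scope.

Record prim := Prim { rho : R; vx : R; vy : R; pr : R }.

Record cons := Cons { cD : R; cm1 : R; cm2 : R; cE : R }.

Definition vel2 (w : prim) : R := vx w ^ 2 + vy w ^ 2.

Definition admissible_prim (w : prim) : Prop :=
  0 < rho w /\ 0 < pr w /\ vel2 w < 1.

Definition lorentz (w : prim) : R := / sqrt (1 - vel2 w).
Definition int_energy (Gam : R) (w : prim) : R := pr w / ((Gam - 1) * rho w).
Definition enthalpy (Gam : R) (w : prim) : R :=
  1 + int_energy Gam w + pr w / rho w.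
Definition sound_speed (Gam : R) (w : prim) : R :=
  sqrt (Gam * pr w / (rho w * enthalpy Gam w)).

Definition to_cons (Gam : R) (w : prim) : cons :=
  let g := lorentz w in
  let D := rho w * g in
  let h := enthalpy Gam w in
  Cons D (D * h * g * vx w) (D * h * g * vy w) (D * h * g - pr w).

Definition fluxF (Gam : R) (w : prim) : cons :=
  let U := to_cons Gam w in
  Cons (cD U * vx w) (cm1 U * vx w + pr w) (cm2 U * vx w) ((cE U + pr w) * vx w).
Definition fluxG (Gam : R) (w : prim) : cons :=
  let U := to_cons Gam w in
  Cons (cD U * vy w) (cm1 U * vy w) (cm2 U * vy w + pr w) ((cE U + pr w) * vy w).

Definition lam_gen (Gam : R) (w : prim) (ui : R) (sgn : R) : R :=
  let c := sound_speed Gam w in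
  let q := vel2 w in
  (ui * (1 - c ^ 2) + sgn * c * / lorentz w
      * sqrt (1 - ui ^ 2 - c ^ 2 * (q - ui ^ 2))) / (1 - c ^ 2 * q).
Definition lamA1 Gam w := lam_gen Gam w (vx w) (-1).
Definition lamA4 Gam w := lam_gen Gam w (vx w) 1.
Definition lamB1 Gam w := lam_gen Gam w (vy w) (-1).
Definition lamB4 Gam w := lam_gen Gam w (vy w) 1.

Definition min4 a b c d := Rmin (Rmin a b) (Rmin c d).
Definition max4 a b c d := Rmax (Rmax a b) (Rmax c d).

Definition cadd (a b : cons) : cons :=
  Cons (cD a + cD b) (cm1 a + cm1 b) (cm2 a + cm2 b) (cE a + cE b).
Definition cscale (k : R) (a : cons) : cons :=
  Cons (k * cD a) (k * cm1 a) (k * cm2 a) (k * cE a).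
Definition csub (a b : cons) : cons := cadd a (cscale (-1) b).

Definition hll2d_state (Gam : R) (wLD wRD wLU wRU : prim) : cons :=
  let SL := 2 * min4 (lamA1 Gam wLD) (lamA1 Gam wRD) (lamA1 Gam wLU) (lamA1 Gam wRU) in
  let SR := 2 * max4 (lamA4 Gam wLD) (lamA4 Gam wRD) (lamA4 Gam wLU) (lamA4 Gam wRU) in
  let SD := 2 * min4 (lamB1 Gam wLD) (lamB1 Gam wRD) (lamB1 Gam wLU) (lamB1 Gam wRU) in
  let SU := 2 * max4 (lamB4 Gam wLD) (lamB4 Gam wRD) (lamB4 Gam wLU) (lamB4 Gam wRU) in
  let den := (SR - SL) * (SU - SD) in
  let ULD := to_cons Gam wLD in let URD := to_cons Gam wRD in
  let ULU := to_cons Gam wLU in let URU := to_cons Gam wRU in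
  let FLD := fluxF Gam wLD in let FRD := fluxF Gam wRD in
  let FLU := fluxF Gam wLU in let FRU := fluxF Gam wRU in
  let GLD := fluxG Gam wLD in let GRD := fluxG Gam wRD in
  let GLU := fluxG Gam wLU in let GRU := fluxG Gam wRU in
  let term1 := csub (cadd (cscale (SR * SU) URU) (cscale (SL * SD) ULD))
                    (cadd (cscale (SR * SD) URD) (cscale (SL * SU) ULU)) in
  let term2 := csub (cscale SU (csub FRU FLU)) (cscale SD (csub FRD FLD)) in
  let term3 := csub (cscale SR (csub GRU GRD)) (cscale SL (csub GLU GLD)) in
  cscale (/ den) (csub (csub term1 term2) term3).

Definition wave_speeds_ok (Gam : R) (wLD wRD wLU wRU : prim) : Prop :=
  2 * min4 (lamA1 Gam wLD) (lamA1 Gam wRD) (lamA1 Gam wLU) (lamA1 Gam wRU) < 0 /\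
  0 < 2 * max4 (lamA4 Gam wLD) (lamA4 Gam wRD) (lamA4 Gam wLU) (lamA4 Gam wRU) /\
  2 * min4 (lamB1 Gam wLD) (lamB1 Gam wRD) (lamB1 Gam wLU) (lamB1 Gam wRU) < 0 /\
  0 < 2 * max4 (lamB4 Gam wLD) (lamB4 Gam wRD) (lamB4 Gam wLU) (lamB4 Gam wRU).

(* The admissible set is the future light cone {D > 0, E > |(D, m)|}, a convex cone. With
   s_L, s_R, s_D, s_U half the HLL speeds, the HLL state is a positive combination of the four
   corner vectors (U - F(U)/s_x) + (U - G(U)/s_y), so it suffices that U - F(U)/s is admissible
   whenever s > 0 and s >= lambda^(4), or s < 0 and s <= lambda^(1) (likewise for G).
   Rotating the direction onto the x-axis, this is the admissibility of s U - F(U) for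
   s >= lambda^(4). Its Minkowski norm is
     gamma^2 (s - u)^2 (rho^2 (h^2 - 1) - 2 rho h p) + p^2 (s^2 - 1),
   and for s^2 < 1 the bound s >= lambda^(4), which reads s > u and
   (1 - c_s^2) (s - u)^2 >= c_s^2 (1 - s^2) (1 - |u|^2), makes the first term dominate
   because p^2 (1 - c_s^2) < c_s^2 (rho^2 (h^2 - 1) - 2 rho h p). *)

From Stdlib Require Import Reals Lra Psatz.
Open Scope R_scope.

Definition admissible_cons (X : cons) : Prop :=
  0 < cD X /\ 0 < cE X /\ cE X ^ 2 - cD X ^ 2 - (cm1 X ^ 2 + cm2 X ^ 2) > 0.

Lemma admissible_cons_ext (X Y : cons) :
  cD X = cD Y -> cm1 X ^ 2 + cm2 X ^ 2 = cm1 Y ^ 2 + cm2 Y ^ 2 -> cE X = cE Y ->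
  admissible_cons Y -> admissible_cons X.
Proof. unfold admissible_cons. intros -> -> ->. tauto. Qed.

Lemma admissible_cons_scale (k : R) (X : cons) :
  0 < k -> admissible_cons X -> admissible_cons (cscale k X).
Proof.
  intros Hk (HD & HE & HN). unfold admissible_cons, cscale; cbn [cD cm1 cm2 cE].
  assert (Hk2 : 0 < k ^ 2) by nra.
  split; [nra|]. split; [nra|].
  replace ((k * cE X) ^ 2 - (k * cD X) ^ 2 - ((k * cm1 X) ^ 2 + (k * cm2 X) ^ 2))
    with (k ^ 2 * (cE X ^ 2 - cD X ^ 2 - (cm1 X ^ 2 + cm2 X ^ 2))) by ring.
  apply Rmult_lt_0_compat; lra.
Qed.

Lemma cauchy_schwarz3 (x1 x2 x3 y1 y2 y3 : R) :
  (x1 * y1 + x2 * y2 + x3 * y3) ^ 2 <= (x1 ^ 2 + x2 ^ 2 + x3 ^ 2) * (y1 ^ 2 + y2 ^ 2 + y3 ^ 2).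
Proof.
  assert (Lagrange : (x1 ^ 2 + x2 ^ 2 + x3 ^ 2) * (y1 ^ 2 + y2 ^ 2 + y3 ^ 2)
                     - (x1 * y1 + x2 * y2 + x3 * y3) ^ 2
                     = (x1 * y2 - x2 * y1) ^ 2 + (x1 * y3 - x3 * y1) ^ 2 + (x2 * y3 - x3 * y2) ^ 2)
    by ring.
  pose proof (pow2_ge_0 (x1 * y2 - x2 * y1)). pose proof (pow2_ge_0 (x1 * y3 - x3 * y1)).
  pose proof (pow2_ge_0 (x2 * y3 - x3 * y2)). lra.
Qed.

Lemma admissible_cons_add (X Y : cons) :
  admissible_cons X -> admissible_cons Y -> admissible_cons (cadd X Y).
Proof.
  destruct X as [d1 a1 b1 e1], Y as [d2 a2 b2 e2].
  unfold admissible_cons, cadd; cbn [cD cm1 cm2 cE]. intros (Hd1 & He1 & HN1) (Hd2 & He2 & HN2).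
  pose proof (cauchy_schwarz3 d1 a1 b1 d2 a2 b2) as HCS.
  set (n1 := d1 ^ 2 + a1 ^ 2 + b1 ^ 2) in *. set (n2 := d2 ^ 2 + a2 ^ 2 + b2 ^ 2) in *.
  set (dot := d1 * d2 + a1 * a2 + b1 * b2) in *.
  assert (Hn : n1 * n2 < (e1 * e2) ^ 2).
  { assert (0 <= n1) by (unfold n1; nra). assert (0 <= n2) by (unfold n2; nra).
    replace ((e1 * e2) ^ 2) with (e1 ^ 2 * e2 ^ 2) by ring.
    apply Rle_lt_trans with (e1 ^ 2 * n2); [apply Rmult_le_compat_r|apply Rmult_lt_compat_l];
      unfold n1, n2 in *; nra. }
  assert (Hdot : dot < e1 * e2).
  { destruct (Rlt_or_le dot (e1 * e2)) as [|Hle]; [assumption|].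
    assert (0 < e1 * e2) by nra.
    assert ((e1 * e2) ^ 2 <= dot ^ 2) by (apply pow_incr; lra). lra. }
  split; [lra|]. split; [lra|].
  replace ((e1 + e2) ^ 2 - (d1 + d2) ^ 2 - ((a1 + a2) ^ 2 + (b1 + b2) ^ 2))
    with ((e1 ^ 2 - n1) + (e2 ^ 2 - n2) + 2 * (e1 * e2 - dot)) by (unfold n1, n2, dot; ring).
  unfold n1, n2 in *; lra.
Qed.

Lemma pos_of_lt_of_sq_lt (v u : R) : v < u -> v ^ 2 < u ^ 2 -> 0 < u.
Proof. intros Hvu Hsq. destruct (Rle_lt_dec u 0); [nra | assumption]. Qed.

(* [lam_gen _ _ a (-1)] and [lam_gen _ _ a 1] are the roots in [s] of the characteristic
   quadratic [(1 - c^2) (s - a)^2 = c^2 (1 - s^2) (1 - q)], where [g = / lorentz w]. *)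
Lemma ge_charpoly_root (a q c g s : R) :
  0 < c < 1 -> 0 <= g -> g ^ 2 = 1 - q -> a ^ 2 <= q < 1 ->
  (a * (1 - c ^ 2) + c * g * sqrt (1 - a ^ 2 - c ^ 2 * (q - a ^ 2))) / (1 - c ^ 2 * q) <= s ->
  a < s /\ c ^ 2 * (1 - s ^ 2) * (1 - q) <= (1 - c ^ 2) * (s - a) ^ 2.
Proof.
  intros Hc Hg Hg2 Hq Hs.
  assert (Hc2 : 0 < c ^ 2 < 1) by (split; nra).
  assert (Hden : 0 < 1 - c ^ 2 * q) by nra.
  assert (Hrad : 0 <= 1 - a ^ 2 - c ^ 2 * (q - a ^ 2)).
  { replace (1 - a ^ 2 - c ^ 2 * (q - a ^ 2)) with ((1 - a ^ 2) * (1 - c ^ 2) + c ^ 2 * (1 - q))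
      by ring.
    assert (0 <= (1 - a ^ 2) * (1 - c ^ 2)) by (apply Rmult_le_pos; lra).
    assert (0 <= c ^ 2 * (1 - q)) by (apply Rmult_le_pos; lra). lra. }
  set (K := c * g * sqrt (1 - a ^ 2 - c ^ 2 * (q - a ^ 2))) in Hs.
  assert (HK0 : 0 <= K)
    by (unfold K; apply Rmult_le_pos; [apply Rmult_le_pos; lra|apply sqrt_pos]).
  assert (HK2 : K ^ 2 = c ^ 2 * (1 - q) * (1 - a ^ 2 - c ^ 2 * (q - a ^ 2))).
  { unfold K. rewrite !Rpow_mult_distr, pow2_sqrt, Hg2 by exact Hrad. ring. }
  set (T := s * (1 - c ^ 2 * q) - a * (1 - c ^ 2)).
  assert (HKT : K <= T).
  { unfold T. apply (Rmult_le_compat_r (1 - c ^ 2 * q)) in Hs; [|lra].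
    unfold Rdiv in Hs. rewrite Rmult_assoc, Rinv_l, Rmult_1_r in Hs; lra. }
  split.
  - assert (HaK : a * c ^ 2 * (1 - q) < K).
    { assert (K ^ 2 - (a * c ^ 2 * (1 - q)) ^ 2 = c ^ 2 * (1 - q) * (1 - a ^ 2) * (1 - c ^ 2 * q))
        by (rewrite HK2; ring).
      assert (0 < c ^ 2 * (1 - q) * (1 - a ^ 2) * (1 - c ^ 2 * q))
        by (repeat apply Rmult_lt_0_compat; lra).
      nra. }
    assert ((1 - c ^ 2 * q) * (s - a) = T - a * c ^ 2 * (1 - q)) by (unfold T; ring).
    nra.
  - assert ((1 - c ^ 2 * q) * ((1 - c ^ 2) * (s - a) ^ 2 - c ^ 2 * (1 - s ^ 2) * (1 - q))
            = T ^ 2 - K ^ 2) by (rewrite HK2; unfold T; ring).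
    nra.
Qed.

(* [s U - F_n(U)] for the flux in a direction [n] along which the velocity of [w] has
   normal component [a] and tangential component [b]. *)
Definition normal_split (Gam : R) (w : prim) (a b s : R) : cons :=
  let g := lorentz w in
  let D := rho w * g in
  let H := D * enthalpy Gam w * g in
  Cons (D * (s - a)) (H * a * (s - a) - pr w) (H * b * (s - a))
       ((H - pr w) * (s - a) - pr w * a).

Section AdmissibleState.

Variables (Gam : R) (w : prim).
Hypotheses (HGam : 1 < Gam <= 2) (Hw : admissible_prim w).

Lemma int_energy_pos : 0 < int_energy Gam w.
Proof.
  destruct Hw as (Hr & Hp & _). unfold int_energy.
  apply Rdiv_lt_0_compat; [lra|apply Rmult_lt_0_compat; lra].
Qed.

Lemma pr_int_energy : pr w = (Gam - 1) * rho w * int_energy Gam w.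
Proof. destruct Hw as (Hr & _ & _). unfold int_energy. field. lra. Qed.

Lemma enthalpy_int_energy : enthalpy Gam w = 1 + Gam * int_energy Gam w.
Proof.
  destruct Hw as (Hr & _ & _). unfold enthalpy, int_energy. field. lra.
Qed.

Lemma two_pr_lt_rho_enthalpy : 2 * pr w < rho w * enthalpy Gam w.
Proof.
  rewrite enthalpy_int_energy, pr_int_energy.
  pose proof int_energy_pos. destruct Hw as (Hr & _ & _).
  assert (0 <= (2 - Gam) * rho w * int_energy Gam w)
    by (apply Rmult_le_pos; [apply Rmult_le_pos|]; lra).
  nra.
Qed.

Lemma lorentz_pos : 0 < lorentz w.
Proof.
  destruct Hw as (_ & _ & Hv). unfold lorentz.
  apply Rinv_0_lt_compat, sqrt_lt_R0. lra.
Qed.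

Lemma inv_lorentz_sq : (/ lorentz w) ^ 2 = 1 - vel2 w.
Proof.
  destruct Hw as (_ & _ & Hv). unfold lorentz.
  rewrite Rinv_inv, pow2_sqrt; lra.
Qed.

Lemma lorentz_sq_mul : lorentz w ^ 2 * (1 - vel2 w) = 1.
Proof.
  pose proof lorentz_pos. rewrite <- inv_lorentz_sq. field. lra.
Qed.

Lemma sound_speed_sq : sound_speed Gam w ^ 2 = Gam * pr w / (rho w * enthalpy Gam w).
Proof.
  unfold sound_speed. rewrite pow2_sqrt; [reflexivity|].
  pose proof two_pr_lt_rho_enthalpy. destruct Hw as (Hr & Hp & _).
  apply Rle_mult_inv_pos; nra.
Qed.

Lemma sound_speed_bounds : 0 < sound_speed Gam w < 1.
Proof.
  pose proof two_pr_lt_rho_enthalpy as Hh. destruct Hw as (Hr & Hp & _).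
  assert (Hc2 : 0 < sound_speed Gam w ^ 2 < 1).
  { rewrite sound_speed_sq. split.
    - apply Rdiv_lt_0_compat; nra.
    - assert (Hrh : 0 < rho w * enthalpy Gam w) by nra.
      unfold Rdiv. apply (Rmult_lt_reg_r (rho w * enthalpy Gam w)); [exact Hrh|].
      rewrite Rmult_assoc, Rinv_l, Rmult_1_r, Rmult_1_l; nra. }
  assert (0 <= sound_speed Gam w) by apply sqrt_pos.
  split; nra.
Qed.

(* The bracket is [E^2 - D^2 - p^2] of the state at rest; it equals
   [rho^2 e (2 + Gam (2 - Gam) e)], which is where [Gam <= 2] enters. *)
Lemma pr_sq_lt_rest_margin :
  let c2 := sound_speed Gam w ^ 2 in
  pr w ^ 2 * (1 - c2) <
  c2 * ((rho w * enthalpy Gam w) ^ 2 - rho w ^ 2 - 2 * (rho w * enthalpy Gam w) * pr w).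
Proof.
  intros c2. unfold c2. rewrite sound_speed_sq, enthalpy_int_energy, pr_int_energy.
  pose proof int_energy_pos as He. destruct Hw as (Hr & _ & _).
  set (e := int_energy Gam w) in *.
  assert (Hh : 0 < 1 + Gam * e) by nra.
  apply Rlt_0_minus.
  replace (_ - _) with (rho w ^ 2 * e ^ 2 * (Gam - 1) * (Gam + 1 + Gam * (2 - Gam) * e)
                        / (1 + Gam * e)).
  2:{ field. split; lra. }
  assert (0 <= Gam * (2 - Gam) * e) by (apply Rmult_le_pos; [apply Rmult_le_pos|]; lra).
  apply Rdiv_lt_0_compat; [|lra].
  apply Rmult_lt_0_compat; [|lra]. apply Rmult_lt_0_compat; [|lra].
  apply Rmult_lt_0_compat; apply pow_lt; lra.
Qed.

Lemma rest_margin_pos :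
  0 < (rho w * enthalpy Gam w) ^ 2 - rho w ^ 2 - 2 * (rho w * enthalpy Gam w) * pr w.
Proof.
  pose proof pr_sq_lt_rest_margin as Hm. pose proof sound_speed_bounds as Hc.
  destruct Hw as (_ & Hp & _). cbv zeta in Hm.
  assert (0 < pr w ^ 2 * (1 - sound_speed Gam w ^ 2)) by (apply Rmult_lt_0_compat; nra).
  nra.
Qed.

Lemma lam_gen_charpoly (a b s : R) :
  vel2 w = a ^ 2 + b ^ 2 -> lam_gen Gam w a 1 <= s ->
  let c2 := sound_speed Gam w ^ 2 in
  a < s /\ c2 * (1 - s ^ 2) * (1 - vel2 w) <= (1 - c2) * (s - a) ^ 2.
Proof.
  intros Hab Hs c2. unfold lam_gen in Hs. cbv zeta in Hs. rewrite Rmult_1_l in Hs.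
  pose proof lorentz_pos. destruct Hw as (_ & _ & Hv).
  apply (ge_charpoly_root _ _ _ (/ lorentz w)); auto.
  - apply sound_speed_bounds.
  - left. apply Rinv_0_lt_compat. assumption.
  - apply inv_lorentz_sq.
  - pose proof (pow2_ge_0 b). lra.
Qed.

Lemma to_cons_admissible : admissible_cons (to_cons Gam w).
Proof.
  pose proof lorentz_pos as Hg. pose proof lorentz_sq_mul as Hg2.
  pose proof two_pr_lt_rho_enthalpy as Hh. pose proof rest_margin_pos as HM.
  destruct Hw as (Hr & Hp & Hv).
  set (g := lorentz w) in *. set (h := enthalpy Gam w) in *.
  assert (Hg1 : 1 <= g ^ 2) by (pose proof (pow2_ge_0 (vx w)); pose proof (pow2_ge_0 (vy w));
                                 unfold vel2 in *; nra).
  unfold admissible_cons, to_cons; cbn [cD cm1 cm2 cE]. fold g h.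
  split; [nra|]. split; [nra|].
  replace ((rho w * g * h * g - pr w) ^ 2 - (rho w * g) ^ 2
           - ((rho w * g * h * g * vx w) ^ 2 + (rho w * g * h * g * vy w) ^ 2))
    with (g ^ 2 * ((rho w * h) ^ 2 * (g ^ 2 * (1 - vel2 w)) - rho w ^ 2 - 2 * (rho w * h) * pr w)
          + pr w ^ 2) by (unfold vel2; ring).
  rewrite Hg2, Rmult_1_r. nra.
Qed.

Section NormalSplit.

Variables (a b s : R).
Hypotheses (Hab : vel2 w = a ^ 2 + b ^ 2) (Hlam : lam_gen Gam w a 1 <= s).

Lemma normal_split_norm :
  let X := normal_split Gam w a b s in
  let rh := rho w * enthalpy Gam w in
  cE X ^ 2 - cD X ^ 2 - (cm1 X ^ 2 + cm2 X ^ 2)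
  = (lorentz w * (s - a)) ^ 2 * (rh ^ 2 - rho w ^ 2 - 2 * rh * pr w) + pr w ^ 2 * (s ^ 2 - 1).
Proof.
  intros X rh. unfold X, normal_split; cbn [cD cm1 cm2 cE]. fold rh.
  pose proof lorentz_sq_mul as Hg2. rewrite Hab in Hg2.
  set (g := lorentz w) in *.
  transitivity ((g * (s - a)) ^ 2 * (rh ^ 2 * (g ^ 2 * (1 - (a ^ 2 + b ^ 2))) - rho w ^ 2
                                      - 2 * rh * pr w) + pr w ^ 2 * (s ^ 2 - 1));
    [unfold rh; ring | rewrite Hg2; ring].
Qed.

Lemma normal_split_norm_pos :
  let X := normal_split Gam w a b s in
  cE X ^ 2 - cD X ^ 2 - (cm1 X ^ 2 + cm2 X ^ 2) > 0.
Proof.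
  intros X. unfold X. rewrite normal_split_norm.
  destruct (lam_gen_charpoly a b s Hab Hlam) as [Has Hchar].
  pose proof lorentz_pos as Hg. pose proof lorentz_sq_mul as Hg2.
  pose proof pr_sq_lt_rest_margin as Hm. pose proof rest_margin_pos as HM.
  pose proof sound_speed_bounds as Hc. destruct Hw as (Hr & Hp & Hv). cbv zeta in Hm |- *.
  set (c2 := sound_speed Gam w ^ 2) in *.
  set (M := (rho w * enthalpy Gam w) ^ 2 - rho w ^ 2 - 2 * (rho w * enthalpy Gam w) * pr w) in *.
  set (g := lorentz w) in *.
  assert (Hc2 : 0 < c2 < 1) by (unfold c2; split; nra).
  assert (Hk : 0 < (g * (s - a)) ^ 2) by (apply pow_lt; nra).
  destruct (Rle_lt_dec 1 (s ^ 2)) as [Hs1 | Hs1].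
  - assert (0 <= pr w ^ 2 * (s ^ 2 - 1)) by (apply Rmult_le_pos; nra). nra.
  - assert (Hchar' : c2 * (1 - s ^ 2) <= (1 - c2) * (g * (s - a)) ^ 2).
    { replace (c2 * (1 - s ^ 2)) with (g ^ 2 * (c2 * (1 - s ^ 2) * (1 - vel2 w)))
        by (transitivity (c2 * (1 - s ^ 2) * (g ^ 2 * (1 - vel2 w))); [ring | rewrite Hg2; ring]).
      replace ((1 - c2) * (g * (s - a)) ^ 2) with (g ^ 2 * ((1 - c2) * (s - a) ^ 2)) by ring.
      apply Rmult_le_compat_l; [nra | exact Hchar]. }
    assert (pr w ^ 2 * (1 - c2) * (1 - s ^ 2) < c2 * M * (1 - s ^ 2))
      by (apply Rmult_lt_compat_r; lra).
    assert (c2 * (1 - s ^ 2) * M <= (1 - c2) * (g * (s - a)) ^ 2 * M)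
      by (apply Rmult_le_compat_r; lra).
    nra.
Qed.

Lemma normal_split_E_pos : 0 < cE (normal_split Gam w a b s).
Proof.
  pose proof normal_split_norm_pos as HN. cbv zeta in HN.
  destruct (lam_gen_charpoly a b s Hab Hlam) as [Has _].
  pose proof to_cons_admissible as (_ & HE & HU).
  destruct Hw as (Hr & Hp & Hv).
  unfold admissible_cons, to_cons in HE, HU. unfold normal_split in HN |- *.
  cbn [cD cm1 cm2 cE] in HE, HU, HN |- *.
  set (g := lorentz w) in *. set (H := rho w * g * enthalpy Gam w * g) in *.
  assert (HH : 0 < H) by lra.
  assert (Ha : a < 1) by (pose proof (pow2_ge_0 b); nra).
  destruct (Rle_lt_dec s 1) as [Hs1 | Hs1].
  - apply (pos_of_lt_of_sq_lt (H * a * (s - a) - pr w)).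
    + apply Rlt_0_minus.
      replace (_ - _) with (H * (s - a) * (1 - a) + pr w * (1 - s)) by ring.
      assert (0 < H * (s - a) * (1 - a))
        by (apply Rmult_lt_0_compat; [apply Rmult_lt_0_compat|]; lra).
      assert (0 <= pr w * (1 - s)) by (apply Rmult_le_pos; lra). lra.
    + pose proof (pow2_ge_0 (rho w * g * (s - a))). pose proof (pow2_ge_0 (H * b * (s - a))).
      lra.
  - assert (HEa : H * a < H - pr w).
    { assert ((H * a) ^ 2 < (H - pr w) ^ 2).
      { replace ((H * vx w) ^ 2 + (H * vy w) ^ 2) with (H ^ 2 * vel2 w) in HU
          by (unfold vel2; ring).
        rewrite Hab in HU. pose proof (pow2_ge_0 (rho w * g)). pose proof (pow2_ge_0 (H * b)).
        nra. }
      nra. }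
    replace ((H - pr w) * (s - a) - pr w * a) with (s * (H - pr w) - H * a) by ring.
    nra.
Qed.

Lemma normal_split_admissible : admissible_cons (normal_split Gam w a b s).
Proof.
  destruct (lam_gen_charpoly a b s Hab Hlam) as [Has _].
  pose proof lorentz_pos. destruct Hw as (Hr & _ & _).
  split; [|split; [apply normal_split_E_pos | apply normal_split_norm_pos]].
  unfold normal_split; cbn [cD]. apply Rmult_lt_0_compat; [nra | lra].
Qed.

End NormalSplit.

End AdmissibleState.

Lemma lam_gen_opp (Gam : R) (w : prim) (a : R) : lam_gen Gam w (- a) 1 = - lam_gen Gam w a (-1).
Proof. unfold lam_gen. replace ((- a) ^ 2) with (a ^ 2) by ring. unfold Rdiv. ring. Qed.

Definition split_x (Gam s : R) (w : prim) : cons :=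
  csub (to_cons Gam w) (cscale (/ s) (fluxF Gam w)).

Definition split_y (Gam s : R) (w : prim) : cons :=
  csub (to_cons Gam w) (cscale (/ s) (fluxG Gam w)).

Lemma split_x_admissible (Gam s : R) (w : prim) :
  1 < Gam <= 2 -> admissible_prim w ->
  (0 < s /\ lamA4 Gam w <= s) \/ (s < 0 /\ s <= lamA1 Gam w) ->
  admissible_cons (split_x Gam s w).
Proof.
  intros HG Hw [[Hs Hl] | [Hs Hl]].
  - apply admissible_cons_ext with (cscale (/ s) (normal_split Gam w (vx w) (vy w) s)).
    1-3: unfold split_x, csub, cadd, cscale, normal_split, fluxF, to_cons; cbn; field; lra.
    apply admissible_cons_scale; [now apply Rinv_0_lt_compat|].
    now apply normal_split_admissible.
  - apply admissible_cons_ext with (cscale (/ - s) (normal_split Gam w (- vx w) (vy w) (- s))).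
    1-3: unfold split_x, csub, cadd, cscale, normal_split, fluxF, to_cons; cbn; field; lra.
    apply admissible_cons_scale; [apply Rinv_0_lt_compat; lra|].
    apply normal_split_admissible; [assumption | assumption | unfold vel2; ring |].
    rewrite lam_gen_opp. unfold lamA1 in Hl. lra.
Qed.

Lemma split_y_admissible (Gam s : R) (w : prim) :
  1 < Gam <= 2 -> admissible_prim w ->
  (0 < s /\ lamB4 Gam w <= s) \/ (s < 0 /\ s <= lamB1 Gam w) ->
  admissible_cons (split_y Gam s w).
Proof.
  intros HG Hw [[Hs Hl] | [Hs Hl]].
  - apply admissible_cons_ext with (cscale (/ s) (normal_split Gam w (vy w) (vx w) s)).
    1-3: unfold split_y, csub, cadd, cscale, normal_split, fluxG, to_cons; cbn; field; lra.
    apply admissible_cons_scale; [now apply Rinv_0_lt_compat|].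
    apply normal_split_admissible; [assumption | assumption | unfold vel2; ring | exact Hl].
  - apply admissible_cons_ext with (cscale (/ - s) (normal_split Gam w (- vy w) (vx w) (- s))).
    1-3: unfold split_y, csub, cadd, cscale, normal_split, fluxG, to_cons; cbn; field; lra.
    apply admissible_cons_scale; [apply Rinv_0_lt_compat; lra|].
    apply normal_split_admissible; [assumption | assumption | unfold vel2; ring |].
    rewrite lam_gen_opp. unfold lamB1 in Hl. lra.
Qed.

Lemma hll2d_state_corners (Gam : R) (wLD wRD wLU wRU : prim) :
  wave_speeds_ok Gam wLD wRD wLU wRU ->
  let sL := min4 (lamA1 Gam wLD) (lamA1 Gam wRD) (lamA1 Gam wLU) (lamA1 Gam wRU) in
  let sR := max4 (lamA4 Gam wLD) (lamA4 Gam wRD) (lamA4 Gam wLU) (lamA4 Gam wRU) in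
  let sD := min4 (lamB1 Gam wLD) (lamB1 Gam wRD) (lamB1 Gam wLU) (lamB1 Gam wRU) in
  let sU := max4 (lamB4 Gam wLD) (lamB4 Gam wRD) (lamB4 Gam wLU) (lamB4 Gam wRU) in
  let V sx sy w := cadd (split_x Gam sx w) (split_y Gam sy w) in
  hll2d_state Gam wLD wRD wLU wRU =
  cscale (/ (2 * (sR - sL) * (sU - sD)))
    (cadd (cadd (cscale (sR * sU) (V sR sU wRU)) (cscale (sL * sD) (V sL sD wLD)))
          (cadd (cscale (- (sR * sD)) (V sR sD wRD)) (cscale (- (sL * sU)) (V sL sU wLU)))).
Proof.
  intros Hspeeds sL sR sD sU V. unfold wave_speeds_ok in Hspeeds.
  unfold hll2d_state, V, split_x, split_y. cbv zeta. fold sL sR sD sU in Hspeeds |- *.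
  clearbody sL sR sD sU.
  generalize (to_cons Gam wLD) (to_cons Gam wRD) (to_cons Gam wLU) (to_cons Gam wRU).
  generalize (fluxF Gam wLD) (fluxF Gam wRD) (fluxF Gam wLU) (fluxF Gam wRU).
  generalize (fluxG Gam wLD) (fluxG Gam wRD) (fluxG Gam wLU) (fluxG Gam wRU).
  intros [] [] [] [] [] [] [] [] [] [] [] [].
  unfold cscale, csub, cadd; cbn. f_equal; field; repeat split; lra.
Qed.

Lemma min4_le (a b c d : R) :
  min4 a b c d <= a /\ min4 a b c d <= b /\ min4 a b c d <= c /\ min4 a b c d <= d.
Proof. unfold min4, Rmin. repeat destruct Rle_dec; lra. Qed.

Lemma max4_ge (a b c d : R) :
  a <= max4 a b c d /\ b <= max4 a b c d /\ c <= max4 a b c d /\ d <= max4 a b c d.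
Proof. unfold max4, Rmax. repeat destruct Rle_dec; lra. Qed.

Theorem theorem1 (Gam : R) (wLD wRD wLU wRU : prim) :
  1 < Gam <= 2 ->
  admissible_prim wLD -> admissible_prim wRD ->
  admissible_prim wLU -> admissible_prim wRU ->
  wave_speeds_ok Gam wLD wRD wLU wRU ->
  let U := hll2d_state Gam wLD wRD wLU wRU in
  0 < cD U /\ 0 < cE U /\ cE U ^ 2 - cD U ^ 2 - (cm1 U ^ 2 + cm2 U ^ 2) > 0.
Proof.
  intros HG HLD HRD HLU HRU Hspeeds U.
  change (admissible_cons U). unfold U. rewrite hll2d_state_corners by exact Hspeeds.
  unfold wave_speeds_ok in Hspeeds. cbv zeta.
  pose proof (min4_le (lamA1 Gam wLD) (lamA1 Gam wRD) (lamA1 Gam wLU) (lamA1 Gam wRU)).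
  pose proof (max4_ge (lamA4 Gam wLD) (lamA4 Gam wRD) (lamA4 Gam wLU) (lamA4 Gam wRU)).
  pose proof (min4_le (lamB1 Gam wLD) (lamB1 Gam wRD) (lamB1 Gam wLU) (lamB1 Gam wRU)).
  pose proof (max4_ge (lamB4 Gam wLD) (lamB4 Gam wRD) (lamB4 Gam wLU) (lamB4 Gam wRU)).
  apply admissible_cons_scale; [apply Rinv_0_lt_compat; nra|].
  repeat apply admissible_cons_add; apply admissible_cons_scale; try nra;
    apply admissible_cons_add;
    solve [apply split_x_admissible; auto; lra | apply split_y_admissible; auto; lra].
Qed.
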